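(* Fix $\theta\in\mathbb{R}^d$, a coarsening function $c:\mathcal{D}\to\mathcal{D}$, and $\ell\in[L]$. Let $(C,D)\sim\mathbb{G}$, $U\sim\mathbb{U}$, $\tilde D_1\sim\mathbb{P}_\theta(C)=\mathsf{T}(\theta,C)$ and $\tilde D_2\sim\mathbb{Q}_\theta(C)=\mathsf{S}(\theta,C)$, and assume $\tilde D_1,\tilde D_2,U$ are pairwise independent. Let $g:\mathcal{D}\times\mathcal{U}\to[0,1]$ be a minimizer, over all functions $f:\mathcal{D}\times\mathcal{U}\to[0,1]$, of $\sum_{i\in\{1,2\}}\mathbf{E}[\lvert f(c(\tilde D_i),U)-h_\ell(D,U)\rvert]$. Define $$\gamma=\sum_{i\in\{1,2\}}\mathbf{E}[\lvert h_\ell(c(\tilde D_i),U)-h_\ell(\tilde D_i,U)\rvert],\qquad \varphi=\sum_{i\in\{1,2\}}\mathbf{E}[\lvert g(c(\tilde D_i),U)-h_\ell(D,U)\rvert],$$ $$\delta=\mathbf{E}\Big[\sum_{x\in c(\mathcal{D})}\lvert g(x,U)-h_\ell(x,U)\rvert\Big].$$ Then $$\mathbf{TD}^\ell_{\mathsf{T}}(\theta)\le \gamma+\varphi+\mathbf{TD}^\ell_{\mathsf{S}}(\theta)+\sqrt{\varepsilon_c(\tilde D_1,\tilde D_2)\cdot\delta}.$$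
   Context: $\mathcal{C}$ is a set of dialogue contexts, $\mathcal{D}$ a set of dialogues, $\mathcal{U}$ an arbitrary set with a distribution $\mathbb{U}$ on it. $\mathbb{G}$ is a (goal) distribution on $\mathcal{C}\times\mathcal{D}$. Test functions $h_1,\dots,h_L:\mathcal{D}\times\mathcal{U}\to[0,1]$ are fixed. An environment $\mathsf{E}$ is a map $(\theta,c)\mapsto\mathbb{P}_\theta(c)$ assigning to parameters $\theta\in\mathbb{R}^d$ and context $c\in\mathcal{C}$ a distribution over $\mathcal{D}$; $\mathsf{S}$ and $\mathsf{T}$ are two environments. Test divergence: $\mathbf{TD}^\ell_{\mathsf{E}}(\theta)=\mathbf{E}[\lvert h_\ell(D,U)-h_\ell(\hat D,U)\rvert]$ where $(C,D)\sim\mathbb{G}$, $\hat D\sim\mathsf{E}(\theta,C)$, $U\sim\mathbb{U}$ independent. Coarsening function: a map $c:\mathcal{D}\to\mathcal{D}$ with $c(\mathcal{D})$ finite and $\lvert c(\mathcal{D})\rvert<\lvert\mathcal{D}\rvert$. Discrete energy distance: for independent $A,B$, $\varepsilon_{01}(A,B)=2\mathbf{E}[1\{A\neq B\}]-\mathbf{E}[1\{A\neq A'\}]-\mathbf{E}[1\{B\neq B'\}]$ with $A',B'$ independent copies of $A,B$; and $\varepsilon_c(A,B)=\varepsilon_{01}(c(A),c(B))$. *)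

From HB Require Import structures.
From mathcomp Require Import all_boot all_order ssralg ssrnum ssrint interval matrix.
From mathcomp Require Import mathcomp_extra boolp classical_sets functions.
From mathcomp Require Import cardinality fsbigop reals ereal topology.
From mathcomp Require Import normedtype sequences esum measure.
From mathcomp Require Import measurable_realfun numfun lebesgue_measure.
From mathcomp Require Import lebesgue_integral kernel probability.
Set Implicit Arguments. Unset Strict Implicit. Unset Printing Implicit Defensive.
Import Order.TTheory GRing.Theory Num.Theory.
Local Open Scope classical_set_scope.
Local Open Scope ring_scope.

Definition Ex {R : realType} {d} {T : measurableType d} (P : probability T R)
  (f : T -> R) : R := fine (\int[P]_w (f w)%:E)%E.

Definition test_fun {R : realType} {dD dU} {TD : measurableType dD}
  {TU : measurableType dU} (f : TD * TU -> R) : Prop :=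
  measurable_fun setT f /\ (forall p, 0 <= f p <= 1).

Definition coarsening {dD} {TD : measurableType dD} (c : TD -> TD) : Prop :=
  finite_set (range c) /\ ~ (([set: TD] #<= range c)%card) /\
  (forall x, measurable (c @^-1` [set x])).

Definition environment (R : realType) (d : nat) {dC dD}
  (TC : measurableType dC) (TD : measurableType dD) :=
  'rV[R]_d -> R.-pker TC ~> TD.

Definition test_div {R : realType} {d : nat} {dC dD dU} {TC : measurableType dC}
  {TD : measurableType dD} {TU : measurableType dU}
  (G : probability (TC * TD)%type R) (PU : probability TU R)
  (hl : TD * TU -> R) (E : environment R d TC TD) (theta : 'rV[R]_d) : R :=
  fine (\int[G]_z \int[E theta z.1]_d' \int[PU]_u
          (`|hl (z.2, u) - hl (d', u)|)%:E)%E.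

(* The joint law of (C, D, Dt, U) on the probability space P is that of
   (C,D) ~ G, Dt ~ K(C) (drawn from C only), U ~ PU independent. *)
Definition env_law {R : realType} {dO dC dD dU} {Om : measurableType dO}
  {TC : measurableType dC} {TD : measurableType dD} {TU : measurableType dU}
  (P : probability Om R) (C : Om -> TC) (D Dt : Om -> TD) (U : Om -> TU)
  (G : probability (TC * TD)%type R) (K : R.-pker TC ~> TD)
  (PU : probability TU R) : Prop :=
  forall f : TC * TD * TD * TU -> \bar R, measurable_fun [set: TC * TD * TD * TU] f ->
    (forall x, 0 <= f x)%E ->
    (\int[P]_w f (C w, D w, Dt w, U w) =
     \int[G]_z \int[K z.1]_d' \int[PU]_u f (z.1, z.2, d', u))%E.

Definition indep2 {R : realType} {dO dA dB} {Om : measurableType dO}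
  {TA : measurableType dA} {TB : measurableType dB}
  (P : probability Om R) (X : Om -> TA) (Y : Om -> TB) : Prop :=
  forall A B, measurable A -> measurable B ->
    P (X @^-1` A `&` Y @^-1` B) = (P (X @^-1` A) * P (Y @^-1` B))%E.

(* discrete energy distance eps_01(A,B) for independent A, B defined on P:
   2E[1{A<>B}] - E[1{A<>A'}] - E[1{B<>B'}], the independent copies being
   realized on the product P x P. *)
Definition neq_ind {R : realType} {T : eqType} (a b : T) : R := (a != b)%:R.

Definition eps01 {R : realType} {dO} {Om : measurableType dO} {T : eqType}
  (P : probability Om R) (A B : Om -> T) : R :=
  2 * fine (\int[P]_w \int[P]_w' (neq_ind (A w) (B w') : R)%:E)%E
  - fine (\int[P]_w \int[P]_w' (neq_ind (A w) (A w') : R)%:E)%E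
  - fine (\int[P]_w \int[P]_w' (neq_ind (B w) (B w') : R)%:E)%E.

Definition eps_c {R : realType} {dO dD} {Om : measurableType dO}
  {TD : measurableType dD} (P : probability Om R) (c : TD -> TD)
  (A B : Om -> TD) : R := eps01 P (c \o A) (c \o B).

Definition phi_obj {R : realType} {dO dD dU} {Om : measurableType dO}
  {TD : measurableType dD} {TU : measurableType dU} (P : probability Om R)
  (c : TD -> TD) (hl : TD * TU -> R) (D D1 D2 : Om -> TD) (U : Om -> TU)
  (f : TD * TU -> R) : R :=
  Ex P (fun w => `|f (c (D1 w), U w) - hl (D w, U w)|)
  + Ex P (fun w => `|f (c (D2 w), U w) - hl (D w, U w)|).

Definition gamma_q {R : realType} {dO dD dU} {Om : measurableType dO}
  {TD : measurableType dD} {TU : measurableType dU} (P : probability Om R)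
  (c : TD -> TD) (hl : TD * TU -> R) (D1 D2 : Om -> TD) (U : Om -> TU) : R :=
  Ex P (fun w => `|hl (c (D1 w), U w) - hl (D1 w, U w)|)
  + Ex P (fun w => `|hl (c (D2 w), U w) - hl (D2 w, U w)|).

Definition delta_q {R : realType} {dO dD dU} {Om : measurableType dO}
  {TD : measurableType dD} {TU : measurableType dU} (P : probability Om R)
  (c : TD -> TD) (hl g : TD * TU -> R) (U : Om -> TU) : R :=
  Ex P (fun w => (\sum_(x \in range c) `|g (x, U w) - hl (x, U w)|)%R).

From HB Require Import structures.
From mathcomp Require Import all_boot all_order ssralg ssrnum ssrint interval matrix.
From mathcomp Require Import mathcomp_extra boolp classical_sets functions.
From mathcomp Require Import cardinality fsbigop reals ereal topology.
From mathcomp Require Import normedtype sequences esum measure.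
From mathcomp Require Import measurable_realfun numfun lebesgue_measure.
From mathcomp Require Import lebesgue_integral kernel probability.
From mathcomp Require Import ring lra.
Import Order.TTheory GRing.Theory Num.Theory.
Local Open Scope classical_set_scope.
Local Open Scope ring_scope.
Set Implicit Arguments. Unset Strict Implicit. Unset Printing Implicit Defensive.

(* Write p_i(x) for the probability that c(D~_i) = x and a(x) = E|g(x,U) - h_l(x,U)|,
   and A_i = E|g(c(D~_i),U) - h_l(c(D~_i),U)|.  Going from h_l(D,U) to h_l(D~_1,U)
   through g(c(D~_1),U) and h_l(c(D~_1),U), and bounding A_2 by the path through
   h_l(D,U) and h_l(D~_2,U), gives TD_T <= gamma + phi + TD_S + (A_1 - A_2).
   As D~_i is independent of U, A_i = sum_x p_i(x) a(x), so Cauchy-Schwarz and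
   0 <= a <= 1 give A_1 - A_2 <= sqrt (sum_x (p_1(x) - p_2(x))^2 * sum_x a(x)),
   where the first sum is eps_c(D~_1, D~_2) and the second is delta. *)

Definition bounded_nng {R : realType} {d} {T : measurableType d} (f : T -> R) :=
  measurable_fun setT f /\ exists M : R, forall x, 0 <= f x <= M.

Section BoundedNng.
Context {R : realType} {d : measure_display} {T : measurableType d}.
Implicit Types f g : T -> R.

Lemma bounded_nng_ge0 f : bounded_nng f -> forall x, 0 <= f x.
Proof. by case=> _ [M fM] x; case/andP: (fM x). Qed.

Lemma bounded_nng_cst (k : R) : 0 <= k -> bounded_nng (fun _ : T => k).
Proof. by move=> k0; split; [exact: measurable_cst | exists k => _; rewrite k0 lexx]. Qed.

Lemma bounded_nngD f g :
  bounded_nng f -> bounded_nng g -> bounded_nng (fun x => f x + g x).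
Proof.
move=> [mf [M fM]] [mg [N gN]]; split; first exact: measurable_funD.
exists (M + N) => x; have /andP[? ?] := fM x; have /andP[? ?] := gN x.
by rewrite addr_ge0 ?lerD.
Qed.

Lemma bounded_nngM f g :
  bounded_nng f -> bounded_nng g -> bounded_nng (fun x => f x * g x).
Proof.
move=> [mf [M fM]] [mg [N gN]]; split; first exact: measurable_funM.
exists (M * N) => x; have /andP[? ?] := fM x; have /andP[? ?] := gN x.
by rewrite mulr_ge0 ?ler_pM.
Qed.

Lemma bounded_nng_sum (I : Type) (s : seq I) (F : I -> T -> R) :
  (forall i, bounded_nng (F i)) -> bounded_nng (fun x => \sum_(i <- s) F i x).
Proof.
move=> bF; elim: s => [|i s IHs].
  by under eq_fun do rewrite big_nil; exact: bounded_nng_cst.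
by under eq_fun do rewrite big_cons; exact: bounded_nngD.
Qed.

Lemma bounded_nng_onem f :
  bounded_nng f -> (forall x, f x <= 1) -> bounded_nng (fun x => 1 - f x).
Proof.
move=> bf f1; have f0 := bounded_nng_ge0 bf; have [mf _] := bf.
split; first exact: measurable_funB.
by exists 1 => x; have := f0 x; have := f1 x; rewrite subr_ge0 gerBl => -> ->.
Qed.

End BoundedNng.

Lemma bounded_nng_comp {R : realType} {d d'} {T : measurableType d}
    {T' : measurableType d'} (f : T' -> R) (X : T -> T') :
  measurable_fun setT X -> bounded_nng f -> bounded_nng (fun x => f (X x)).
Proof. by move=> mX [mf [M fM]]; split; [exact: measurableT_comp mf mX | exists M]. Qed.

Lemma integral_cst_mass1 {R : realType} d (T : measurableType d)
    (mu : {measure set T -> \bar R}) (r : \bar R) :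
  mu setT = 1%E -> (\int[mu]_x r = r)%E.
Proof. by move=> mu1; rewrite (_ : (fun _ => r) = cst r) // integral_cst // mu1 mule1. Qed.

Section Expectation.
Context {R : realType} {d : measure_display} {Om : measurableType d}.
Variable P : probability Om R.
Implicit Types f g : Om -> R.

Lemma integral_Ex f : bounded_nng f -> (\int[P]_w (f w)%:E)%E = (Ex P f)%:E.
Proof.
move=> bf; have [mf [M fM]] := bf; have f0 := bounded_nng_ge0 bf.
have int_ge0 : (0 <= \int[P]_w (f w)%:E)%E.
  by apply: integral_ge0 => w _; rewrite lee_fin.
rewrite /Ex fineK // ge0_fin_numE //.
apply: (@le_lt_trans _ _ (\int[P]_w (cst M%:E) w)%E); last first.
  by rewrite integral_cst_mass1; [exact: ltry | exact: probability_setT].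
apply: ge0_le_integral => //; first by move=> w _; rewrite lee_fin.
- exact/measurable_EFinP.
- by move=> w _; rewrite lee_fin; case/andP: (fM w).
Qed.

Lemma Ex_ge0 f : bounded_nng f -> 0 <= Ex P f.
Proof.
by move=> bf; rewrite -lee_fin -integral_Ex //; apply: integral_ge0 => w _;
  rewrite lee_fin bounded_nng_ge0.
Qed.

Lemma ler_Ex f g :
  bounded_nng f -> bounded_nng g -> (forall w, f w <= g w) -> Ex P f <= Ex P g.
Proof.
move=> bf bg fg; rewrite -lee_fin -!integral_Ex //.
apply: ge0_le_integral => //; first by move=> w _; rewrite lee_fin bounded_nng_ge0.
- by apply/measurable_EFinP; case: bf.
- by apply/measurable_EFinP; case: bg.
- by move=> w _; rewrite lee_fin.
Qed.

Lemma ExD f g :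
  bounded_nng f -> bounded_nng g -> Ex P (fun w => f w + g w) = Ex P f + Ex P g.
Proof.
move=> bf bg; apply: EFin_inj; rewrite EFinD -!integral_Ex //; last exact: bounded_nngD.
under eq_integral do rewrite EFinD.
apply: ge0_integralD => //; do ?[by move=> w _; rewrite lee_fin bounded_nng_ge0].
- by apply/measurable_EFinP; case: bf.
- by apply/measurable_EFinP; case: bg.
Qed.

Lemma ler_Ex_add3 f f1 f2 f3 :
  bounded_nng f -> bounded_nng f1 -> bounded_nng f2 -> bounded_nng f3 ->
  (forall w, f w <= f1 w + f2 w + f3 w) -> Ex P f <= Ex P f1 + Ex P f2 + Ex P f3.
Proof.
move=> bf bf1 bf2 bf3 le_f; have bf12 := bounded_nngD bf1 bf2.
rewrite -[Ex P f1 + _]ExD // -ExD //.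
by apply: ler_Ex => //; exact: bounded_nngD.
Qed.

Lemma Ex_cst (k : R) : Ex P (fun _ => k) = k.
Proof. by rewrite /Ex integral_cst_mass1 //; exact: probability_setT. Qed.

Lemma ExMr f (k : R) : 0 <= k -> bounded_nng f -> Ex P (fun w => f w * k) = Ex P f * k.
Proof.
move=> k0 bf; apply: EFin_inj.
rewrite EFinM -!integral_Ex //; last exact: bounded_nngM (bounded_nng_cst k0).
under eq_integral do rewrite EFinM.
have mf : measurable_fun setT (fun w => (f w)%:E) by apply/measurable_EFinP; case: bf.
by rewrite (ge0_integralZr _ _ mf) // => w _; rewrite lee_fin bounded_nng_ge0.
Qed.

Lemma Ex_sum (I : Type) (s : seq I) (F : I -> Om -> R) :
  (forall i, bounded_nng (F i)) ->
  Ex P (fun w => \sum_(i <- s) F i w) = \sum_(i <- s) Ex P (F i).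
Proof.
move=> bF; elim: s => [|i s IHs].
  by under eq_fun do rewrite big_nil; rewrite big_nil Ex_cst.
under eq_fun do rewrite big_cons.
by rewrite big_cons ExD ?IHs //; exact: bounded_nng_sum.
Qed.

Lemma Ex_onem f :
  bounded_nng f -> (forall w, f w <= 1) -> Ex P (fun w => 1 - f w) = 1 - Ex P f.
Proof.
move=> bf f1; apply/eqP; rewrite eq_sym subr_eq -ExD //; last exact: bounded_nng_onem.
by under eq_fun do rewrite subrK; rewrite Ex_cst.
Qed.

Lemma Ex_le1 f : bounded_nng f -> (forall w, f w <= 1) -> Ex P f <= 1.
Proof.
by move=> bf f1; rewrite -[1](Ex_cst 1); apply: ler_Ex => //; exact: bounded_nng_cst.
Qed.

End Expectation.

Lemma test_dist_le1 {R : realType} {dD dU} {TD : measurableType dD} {TU : measurableType dU}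
    (f1 f2 : TD * TU -> R) a b :
  test_fun f1 -> test_fun f2 -> `|f1 a - f2 b| <= 1.
Proof.
move=> [_ f1b] [_ f2b]; have /andP[? ?] := f1b a; have /andP[? ?] := f2b b.
by rewrite ler_norml; apply/andP; split; lra.
Qed.

Lemma bounded_nng_test_dist {R : realType} {dD dU dT} {TD : measurableType dD}
    {TU : measurableType dU} {T : measurableType dT} (f1 f2 : TD * TU -> R)
    (X Y : T -> TD) (V : T -> TU) :
  test_fun f1 -> test_fun f2 -> measurable_fun setT X -> measurable_fun setT Y ->
  measurable_fun setT V -> bounded_nng (fun w => `|f1 (X w, V w) - f2 (Y w, V w)|).
Proof.
move=> tf1 tf2 mX mY mV; split; last first.
  by exists 1 => w; rewrite normr_ge0 test_dist_le1.
have [[mf1 _] [mf2 _]] := (tf1, tf2).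
apply: measurableT_comp; first exact: normr_measurable.
by apply: measurable_funB; apply: measurableT_comp => //; exact: measurable_fun_pair.
Qed.

Section EnvLaw.
Context {R : realType} {dO dC dD dU : measure_display} {Om : measurableType dO}
  {TC : measurableType dC} {TD : measurableType dD} {TU : measurableType dU}.
Variables (P : probability Om R) (C : Om -> TC) (D Dt : Om -> TD) (U : Om -> TU)
  (G : probability (TC * TD)%type R) (K : R.-pker TC ~> TD) (PU : probability TU R).
Hypothesis law : env_law P C D Dt U G K PU.
Hypotheses (mC : measurable_fun setT C) (mD : measurable_fun setT D)
  (mDt : measurable_fun setT Dt) (mU : measurable_fun setT U).

Lemma env_law_Ex (F : TC * TD * TD * TU -> R) : bounded_nng F ->
  ((Ex P (fun w => F (C w, D w, Dt w, U w)))%:E =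
   \int[G]_z \int[K z.1]_d' \int[PU]_u (F (z.1, z.2, d', u))%:E)%E.
Proof.
move=> bF; have mCDDtU : measurable_fun setT (fun w => (C w, D w, Dt w, U w)).
  exact: measurable_fun_pair (measurable_fun_pair (measurable_fun_pair mC mD) mDt) mU.
rewrite -integral_Ex; last exact: bounded_nng_comp.
have mF : measurable_fun setT (fun x => (F x)%:E) by apply/measurable_EFinP; case: bF.
by rewrite (law mF) // => x; rewrite lee_fin bounded_nng_ge0.
Qed.

Lemma env_law_Ex_U (psi : TU -> R) : bounded_nng psi ->
  ((Ex P (fun w => psi (U w)))%:E = \int[PU]_u (psi u)%:E)%E.
Proof.
move=> bpsi; have := env_law_Ex (F := fun x => psi x.2) (bounded_nng_comp _ bpsi).
move=> /(_ measurable_snd) /= ->.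
transitivity (\int[G]_z \int[PU]_u (psi u)%:E)%E.
  by apply: eq_integral => z _; apply: integral_cst_mass1; exact: prob_kernel.
by apply: integral_cst_mass1; exact: probability_setT.
Qed.

Lemma env_law_Ex_mul (phi : TD -> R) (psi : TU -> R) :
  bounded_nng phi -> bounded_nng psi ->
  Ex P (fun w => phi (Dt w) * psi (U w)) =
  Ex P (fun w => phi (Dt w)) * Ex P (fun w => psi (U w)).
Proof.
move=> bphi bpsi; set e := Ex P (fun w => psi (U w)).
have e0 : 0 <= e by apply: Ex_ge0; exact: bounded_nng_comp.
have bF : bounded_nng (fun x : TC * TD * TD * TU => phi x.1.2 * psi x.2).
  by apply: bounded_nngM; apply: bounded_nng_comp => //; exact: measurableT_comp.
have bF' : bounded_nng (fun x : TC * TD * TD * TU => phi x.1.2 * e).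
  apply: bounded_nngM (bounded_nng_cst e0).
  by apply: bounded_nng_comp => //; exact: measurableT_comp.
rewrite -ExMr //; last exact: bounded_nng_comp.
apply: EFin_inj; rewrite (env_law_Ex bF) (env_law_Ex bF') /=.
apply: eq_integral => z _; apply: eq_integral => d' _.
rewrite integral_cst_mass1; last exact: probability_setT.
under eq_integral do rewrite EFinM.
rewrite ge0_integralZl //.
- by rewrite -env_law_Ex_U // EFinM.
- by apply/measurable_EFinP; case: bpsi.
- by move=> u _; rewrite lee_fin bounded_nng_ge0.
- by rewrite lee_fin bounded_nng_ge0.
Qed.

End EnvLaw.

Lemma test_div_Ex {R : realType} {n : nat} {dO dC dD dU : measure_display}
    {Om : measurableType dO} {TC : measurableType dC} {TD : measurableType dD}
    {TU : measurableType dU} (P : probability Om R) (C : Om -> TC) (D Dt : Om -> TD)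
    (U : Om -> TU) (G : probability (TC * TD)%type R) (E : environment R n TC TD)
    (theta : 'rV[R]_n) (PU : probability TU R) (hl : TD * TU -> R) :
  env_law P C D Dt U G (E theta) PU ->
  measurable_fun setT C -> measurable_fun setT D -> measurable_fun setT Dt ->
  measurable_fun setT U -> test_fun hl ->
  test_div G PU hl E theta = Ex P (fun w => `|hl (D w, U w) - hl (Dt w, U w)|).
Proof.
move=> law mC mD mDt mU thl.
have bF : bounded_nng (fun x : TC * TD * TD * TU => `|hl (x.1.1.2, x.2) - hl (x.1.2, x.2)|).
  apply: bounded_nng_test_dist => //; first exact: measurableT_comp measurable_snd
    (measurableT_comp measurable_fst measurable_fst).
  exact: measurableT_comp measurable_snd measurable_fst.
by rewrite /test_div -(env_law_Ex law mC mD mDt mU bF).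
Qed.

Lemma cauchy_schwarz_sum (R : realFieldType) (I : Type) (s : seq I) (u v : I -> R) :
  (\sum_(i <- s) u i * v i) ^+ 2 <= (\sum_(i <- s) u i ^+ 2) * (\sum_(i <- s) v i ^+ 2).
Proof.
set A := \sum_(i <- s) u i ^+ 2; set B := \sum_(i <- s) v i ^+ 2.
set S := \sum_(i <- s) u i * v i.
have : 0 <= \sum_(i <- s) \sum_(j <- s) (u i * v j - u j * v i) ^+ 2.
  by apply: sumr_ge0 => i _; apply: sumr_ge0 => j _; exact: sqr_ge0.
(* Lagrange's identity *)
have -> : \sum_(i <- s) \sum_(j <- s) (u i * v j - u j * v i) ^+ 2 = 2 * (A * B - S ^+ 2).
  transitivity (\sum_(i <- s) (u i ^+ 2 * B + v i ^+ 2 * A - 2 * (u i * v i * S))).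
    apply: eq_bigr => i _; rewrite /A /B /S !mulr_sumr -sumrN -!big_split /=.
    by apply: eq_bigr => j _; ring.
  rewrite !big_split /= sumrN -!mulr_suml -mulr_sumr -/A -/B -mulr_suml -/S; ring.
nra.
Qed.

Lemma sum_mul_le_sqrt (R : rcfType) (I : Type) (s : seq I) (a b : I -> R) :
  (forall i, 0 <= a i <= 1) ->
  \sum_(i <- s) a i * b i <= Num.sqrt ((\sum_(i <- s) b i ^+ 2) * \sum_(i <- s) a i).
Proof.
move=> a01; have [S_le0|S_gt0] := leP (\sum_(i <- s) a i * b i) 0.
  exact: le_trans S_le0 (sqrtr_ge0 _).
rewrite -(ger0_norm (ltW S_gt0)) -sqrtr_sqr; apply: ler_wsqrtr.
apply: le_trans (cauchy_schwarz_sum s a b) _; rewrite mulrC; apply: ler_wpM2l.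
  by apply: sumr_ge0 => i _; exact: sqr_ge0.
by apply: ler_sum => i _; have /andP[? ?] := a01 i; nra.
Qed.

Lemma ler_dist_path3 (R : numDomainType) (a x y b : R) :
  `|a - b| <= `|a - x| + `|x - y| + `|y - b|.
Proof. by rewrite -addrA (le_trans (ler_distD x a b)) // lerD2l ler_distD. Qed.

Definition coarse_range {d} {T : measurableType d} (c : T -> T) : seq T :=
  finmap.enum_fset (fset_set (range c)).

Definition coarse_pmf {R : realType} {dO dD} {Om : measurableType dO}
    {TD : measurableType dD} (P : probability Om R) (c : TD -> TD) (X : Om -> TD)
    (x : TD) : R :=
  Ex P (fun w => (c (X w) == x)%:R).

Section Coarsening.
Context {d : measure_display} {T : measurableType d} (c : T -> T).
Hypothesis hc : coarsening c.

Lemma measurable_coarsening : measurable_fun setT c.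
Proof.
have [fin_c [_ mfib]] := hc; move=> _ Y mY; rewrite setTI.
have -> : c @^-1` Y = \bigcup_(x in range c `&` Y) c @^-1` [set x].
  apply/seteqP; split => [z Ycz|z [x [_ Yx] /= ->]] //.
  by exists (c z) => //; split => //; exists z.
by apply: fin_bigcup_measurable => [|x _]; [exact: finite_setIl | exact: mfib].
Qed.

Lemma bounded_nng_coarse_indicator {R : realType} x :
  bounded_nng (fun y => (c y == x)%:R : R).
Proof.
have -> : (fun y => (c y == x)%:R : R) = \1_(c @^-1` [set x]).
  apply: funext => y; rewrite indicE.
  by case: (c y =P x) => [<-|ne]; [rewrite mem_set | rewrite memNset].
split; first by apply: measurable_indic; exact: hc.2.2.
by exists 1 => y; rewrite indicE; case: (_ \in _); rewrite ?lexx ?ler01.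
Qed.

Lemma fsbig_coarse_range {R : realType} (F : T -> R) :
  \sum_(x \in range c) F x = \sum_(x <- coarse_range c) F x.
Proof. by rewrite fsbig_finite //; exact: hc.1. Qed.

Lemma sum_coarse_indicator {R : realType} (F : T -> R) y :
  \sum_(x <- coarse_range c) (c y == x)%:R * F x = F (c y).
Proof.
have cy_in : c y \in coarse_range c by rewrite (in_fset_set hc.1) mem_set //; exists y.
rewrite (bigD1_seq (c y)) ?finmap.fset_uniq //= eqxx mul1r big1 ?addr0 // => x.
by rewrite eq_sym => /negbTE ->; rewrite mul0r.
Qed.

End Coarsening.

Section CoarseLaw.
Context {R : realType} {dO dD : measure_display} {Om : measurableType dO}
  {TD : measurableType dD}.
Variables (P : probability Om R) (c : TD -> TD).
Hypothesis hc : coarsening c.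

Lemma bounded_nng_coarse_event (X : Om -> TD) x :
  measurable_fun setT X -> bounded_nng (fun w => (c (X w) == x)%:R : R).
Proof. by move=> mX; exact: bounded_nng_comp mX (bounded_nng_coarse_indicator hc x). Qed.

Lemma coarse_pmf_ge0 (X : Om -> TD) x : measurable_fun setT X -> 0 <= coarse_pmf P c X x.
Proof. by move=> mX; exact/Ex_ge0/bounded_nng_coarse_event. Qed.

Lemma coarse_pmf_le1 (X : Om -> TD) x : measurable_fun setT X -> coarse_pmf P c X x <= 1.
Proof.
by move=> mX; apply: Ex_le1 (bounded_nng_coarse_event x mX) _ => w; case: eqP.
Qed.

Lemma Ex_neq_coarse (A B : Om -> TD) :
  measurable_fun setT A -> measurable_fun setT B ->
  fine (\int[P]_w \int[P]_w' (neq_ind (c (A w)) (c (B w')) : R)%:E)%E =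
  1 - \sum_(x <- coarse_range c) coarse_pmf P c A x * coarse_pmf P c B x.
Proof.
move=> mA mB; set pB := coarse_pmf P c B.
have inner w : (\int[P]_w' (neq_ind (c (A w)) (c (B w')) : R)%:E)%E =
    (1 - pB (c (A w)))%:E.
  have bB := bounded_nng_coarse_event (c (A w)) mB.
  have bB1 w' : (c (B w') == c (A w))%:R <= 1 :> R by case: eqP.
  rewrite -Ex_onem // -integral_Ex; last exact: bounded_nng_onem.
  apply: eq_integral => w' _; rewrite /neq_ind eq_sym.
  by case: (c (B w') == c (A w)); rewrite ?subrr ?subr0.
have bS : bounded_nng (fun w => \sum_(x <- coarse_range c) (c (A w) == x)%:R * pB x).
  apply: bounded_nng_sum => x; apply: bounded_nngM (bounded_nng_coarse_event x mA) _.
  exact: bounded_nng_cst (coarse_pmf_ge0 _ mB).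
transitivity (Ex P (fun w => 1 - \sum_(x <- coarse_range c) (c (A w) == x)%:R * pB x)).
  by congr fine; apply: eq_integral => w _; rewrite inner (sum_coarse_indicator hc).
rewrite Ex_onem // => [|w]; last first.
  by rewrite (sum_coarse_indicator hc); exact: coarse_pmf_le1 _ mB.
rewrite Ex_sum => [|x]; last first.
  apply: bounded_nngM (bounded_nng_coarse_event x mA) _.
  exact: bounded_nng_cst (coarse_pmf_ge0 _ mB).
congr (1 - _); apply: eq_bigr => x _.
by rewrite ExMr //; [exact: coarse_pmf_ge0 | exact: bounded_nng_coarse_event].
Qed.

Lemma eps_c_sum_sq (D1 D2 : Om -> TD) :
  measurable_fun setT D1 -> measurable_fun setT D2 ->
  eps_c P c D1 D2 =
  \sum_(x <- coarse_range c) (coarse_pmf P c D1 x - coarse_pmf P c D2 x) ^+ 2.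
Proof.
move=> mD1 mD2; rewrite /eps_c /eps01 /= !Ex_neq_coarse //.
set p1 := coarse_pmf P c D1; set p2 := coarse_pmf P c D2.
have -> : \sum_(x <- coarse_range c) (p1 x - p2 x) ^+ 2 =
    \sum_(x <- coarse_range c) p1 x * p1 x + \sum_(x <- coarse_range c) p2 x * p2 x
    - 2 * \sum_(x <- coarse_range c) p1 x * p2 x.
  by rewrite mulr_sumr -sumrN -!big_split /=; apply: eq_bigr => x _; ring.
ring.
Qed.

End CoarseLaw.

Lemma Ex_coarse_split {R : realType} {dO dC dD dU : measure_display}
    {Om : measurableType dO} {TC : measurableType dC} {TD : measurableType dD}
    {TU : measurableType dU} (P : probability Om R) (C : Om -> TC) (D Dt : Om -> TD)
    (U : Om -> TU) (G : probability (TC * TD)%type R) (K : R.-pker TC ~> TD)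
    (PU : probability TU R) (c : TD -> TD) (F : TD * TU -> R) :
  coarsening c -> env_law P C D Dt U G K PU ->
  measurable_fun setT C -> measurable_fun setT D -> measurable_fun setT Dt ->
  measurable_fun setT U -> (forall x, bounded_nng (fun u => F (x, u))) ->
  Ex P (fun w => F (c (Dt w), U w)) =
  \sum_(x <- coarse_range c) coarse_pmf P c Dt x * Ex P (fun w => F (x, U w)).
Proof.
move=> hc law mC mD mDt mU bF.
transitivity (Ex P (fun w => \sum_(x <- coarse_range c) (c (Dt w) == x)%:R * F (x, U w))).
  by congr Ex; apply: funext => w; rewrite (sum_coarse_indicator hc (fun x => F (x, U w))).
rewrite Ex_sum => [|x]; last first.
  exact: bounded_nngM (bounded_nng_coarse_event hc x mDt) (bounded_nng_comp mU (bF x)).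
apply: eq_bigr => x _.
exact: (env_law_Ex_mul law mC mD mDt mU (bounded_nng_coarse_indicator hc x) (bF x)).
Qed.

Section DivergenceBound.
Context {R : realType} {dO dC dD dU : measure_display} {Om : measurableType dO}
  {TC : measurableType dC} {TD : measurableType dD} {TU : measurableType dU}.
Variables (P : probability Om R) (C : Om -> TC) (D D1 D2 : Om -> TD) (U : Om -> TU)
  (G : probability (TC * TD)%type R) (K1 K2 : R.-pker TC ~> TD) (PU : probability TU R)
  (c : TD -> TD) (hl g : TD * TU -> R).
Hypotheses (hc : coarsening c) (thl : test_fun hl) (tg : test_fun g).
Hypotheses (mC : measurable_fun setT C) (mD : measurable_fun setT D)
  (mD1 : measurable_fun setT D1) (mD2 : measurable_fun setT D2)
  (mU : measurable_fun setT U).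
Hypotheses (law1 : env_law P C D D1 U G K1 PU) (law2 : env_law P C D D2 U G K2 PU).

Lemma Ex_dist_le_through_coarse (X : Om -> TD) : measurable_fun setT X ->
  Ex P (fun w => `|hl (D w, U w) - hl (X w, U w)|) <=
  Ex P (fun w => `|g (c (X w), U w) - hl (D w, U w)|)
  + Ex P (fun w => `|g (c (X w), U w) - hl (c (X w), U w)|)
  + Ex P (fun w => `|hl (c (X w), U w) - hl (X w, U w)|).
Proof.
move=> mX; have mcX := measurableT_comp (measurable_coarsening hc) mX.
apply: ler_Ex_add3; try exact: bounded_nng_test_dist.
by move=> w; rewrite [E in _ <= E + _ + _]distrC; exact: ler_dist_path3.
Qed.

Lemma coarse_err_le_through_D (X : Om -> TD) : measurable_fun setT X ->
  Ex P (fun w => `|g (c (X w), U w) - hl (c (X w), U w)|) <=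
  Ex P (fun w => `|g (c (X w), U w) - hl (D w, U w)|)
  + Ex P (fun w => `|hl (D w, U w) - hl (X w, U w)|)
  + Ex P (fun w => `|hl (c (X w), U w) - hl (X w, U w)|).
Proof.
move=> mX; have mcX := measurableT_comp (measurable_coarsening hc) mX.
apply: ler_Ex_add3; try exact: bounded_nng_test_dist.
by move=> w; rewrite [E in _ <= _ + E]distrC; exact: ler_dist_path3.
Qed.

Lemma coarse_err_gap_le_sqrt :
  Ex P (fun w => `|g (c (D1 w), U w) - hl (c (D1 w), U w)|)
  - Ex P (fun w => `|g (c (D2 w), U w) - hl (c (D2 w), U w)|) <=
  Num.sqrt (eps_c P c D1 D2 * delta_q P c hl g U).
Proof.
set a := fun x => Ex P (fun w => `|g (x, U w) - hl (x, U w)|).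
have bF x : bounded_nng (fun u => `|g (x, u) - hl (x, u)|)
  by apply: bounded_nng_test_dist.
have a01 x : 0 <= a x <= 1.
  have bFU := bounded_nng_comp mU (bF x).
  by rewrite Ex_ge0 //= Ex_le1 // => w; exact: test_dist_le1.
have -> : delta_q P c hl g U = \sum_(x <- coarse_range c) a x.
  rewrite /delta_q; under eq_fun do rewrite (fsbig_coarse_range hc).
  by rewrite Ex_sum // => x; exact: bounded_nng_comp mU (bF x).
rewrite (Ex_coarse_split (F := fun p => `|g p - hl p|) hc law1) //.
rewrite (Ex_coarse_split (F := fun p => `|g p - hl p|) hc law2) //.
rewrite eps_c_sum_sq // -sumrB.
under eq_bigr do rewrite -mulrBl mulrC.
exact: sum_mul_le_sqrt.
Qed.

End DivergenceBound.

Unset Implicit Arguments.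

Theorem theorem1 (R : realType) (d L : nat) (dC dD dU dO : measure_display)
  (TC : measurableType dC) (TD : measurableType dD) (TU : measurableType dU)
  (G : probability (TC * TD)%type R) (PU : probability TU R)
  (h : 'I_L -> TD * TU -> R) (T S : environment R d TC TD)
  (theta : 'rV[R]_d) (c : TD -> TD) (l : 'I_L)
  (Om : measurableType dO) (P : probability Om R)
  (C : Om -> TC) (D D1 D2 : Om -> TD) (U : Om -> TU) (g : TD * TU -> R) :
  (forall k, test_fun (h k)) ->
  coarsening c ->
  measurable_fun setT C -> measurable_fun setT D ->
  measurable_fun setT D1 -> measurable_fun setT D2 -> measurable_fun setT U ->
  env_law P C D D1 U G (T theta) PU ->
  env_law P C D D2 U G (S theta) PU ->
  indep2 P D1 D2 -> indep2 P D1 U -> indep2 P D2 U ->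
  test_fun g ->
  (forall f, test_fun f -> phi_obj P c (h l) D D1 D2 U g <= phi_obj P c (h l) D D1 D2 U f) ->
  test_div G PU (h l) T theta <=
    gamma_q P c (h l) D1 D2 U + phi_obj P c (h l) D D1 D2 U g
    + test_div G PU (h l) S theta
    + Num.sqrt (eps_c P c D1 D2 * delta_q P c (h l) g U).
Proof.
move=> th hc mC mD mD1 mD2 mU law1 law2 _ _ _ tg _.
rewrite (test_div_Ex law1) // (test_div_Ex law2) // /gamma_q /phi_obj.
have := Ex_dist_le_through_coarse P hc (th l) tg mD mU mD1.
have := coarse_err_le_through_D P hc (th l) tg mD mU mD2.
have := coarse_err_gap_le_sqrt hc (th l) tg mC mD mD1 mD2 mU law1 law2.
lra.
Qed.
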